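(* For all integers $n\ge0$, $pl_2(5n+3)\equiv0\pmod5$ and $pl_2(5n+4)\equiv0\pmod5$.
   Context: $pl_2(n)$ denotes the number of $2$-component plane partitions of $n$ (plane partitions of $n$ all of whose entries are $\le 2$), with $pl_2(0)=1$; equivalently $\sum_{n\ge0}pl_2(n)q^n=\frac{1}{1-q}\prod_{n=2}^{\infty}(1-q^n)^{-2}$. *)

From mathcomp Require Import all_boot.
Set Implicit Arguments. Unset Strict Implicit. Unset Printing Implicit Defensive.

Definition fps := nat -> nat.

Definition fps_mul (f g : fps) : fps :=
  fun n => \sum_(i < n.+1) f i * g (n - i).

(* 1/(1-q) = sum_{k>=0} q^k *)
Definition fps_geom : fps := fun _ => 1.

(* (1-q^m)^{-2} = sum_{j>=0} (j+1) q^{m j}, for m >= 1 *)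
Definition fps_inv_sq (m : nat) : fps :=
  fun k => if m %| k then (k %/ m).+1 else 0.

Fixpoint pl2_partial (N : nat) : fps :=
  match N with
  | 0 => fps_geom
  | 1 => fps_geom
  | N'.+1 => fps_mul (pl2_partial N') (fps_inv_sq N'.+1)
  end.

(* pl_2(n) = coefficient of q^n in 1/(1-q) prod_{m>=2} (1-q^m)^{-2}.
   Factors with m > n are 1 + O(q^{m}) and do not affect the coefficient
   of q^n, so the coefficient of q^n of the infinite product equals that
   of the partial product up to m = n. *)
Definition pl2 (n : nat) : nat := pl2_partial n n.

(** Write [P(q) = prod_(m >= 1) (1 - q^m)], so that [sum_n pl2 n q^n = (1 - q) / P(q)^2]
    and hence [(sum_n pl2 n q^n) * P(q)^5 = (1 - q) * P(q)^3].  Modulo 5,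
    [P(q)^5 = P(q^5)] is a series in [q^5] with constant term 1, while by Jacobi's identity
    [P(q)^3 = sum_k (-1)^k (2k+1) q^(k(k+1)/2)].  The exponent [k(k+1)/2] is [0], [1] or [3]
    modulo 5, and it is [3] only when [k = 2 mod 5], i.e. when [5 | 2k+1]; so modulo 5 the
    series [(1 - q) P(q)^3] has no terms [q^m] with [m = 3, 4 mod 5], and dividing by
    [P(q^5)] preserves this.
    Everything is done with polynomials over [F_5] compared below a degree bound.  Jacobi's
    identity is obtained from the q-binomial theorem for [prod_(i <= 2n) (q^n - z q^i)] by
    differentiating in [z] at [z = 1]; the factor [i = n] vanishes there. *)

From mathcomp Require Import all_boot all_algebra ring zify.
Set Implicit Arguments. Unset Strict Implicit. Unset Printing Implicit Defensive.
Import GRing.Theory.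
Local Open Scope ring_scope.

Section TruncatedEquality.
Variable R : comNzRingType.
Implicit Types p r : {poly R}.

Definition eq_upto (L : nat) p r := forall i, (i < L)%N -> p`_i = r`_i.

Lemma eq_upto_sym L p r : eq_upto L p r -> eq_upto L r p.
Proof. by move=> H i Hi; rewrite H. Qed.

Lemma eq_upto_trans L p r s : eq_upto L p r -> eq_upto L r s -> eq_upto L p s.
Proof. by move=> H1 H2 i Hi; rewrite H1 // H2. Qed.

Lemma eq_upto_leq L L' p r : (L' <= L)%N -> eq_upto L p r -> eq_upto L' p r.
Proof. by move=> HL H i Hi; apply: H; apply: leq_trans HL. Qed.

Lemma eq_uptoD L p p' r r' :
  eq_upto L p p' -> eq_upto L r r' -> eq_upto L (p + r) (p' + r').
Proof. by move=> H1 H2 i Hi; rewrite !coefD H1 // H2. Qed.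

Lemma eq_uptoM L p p' r r' :
  eq_upto L p p' -> eq_upto L r r' -> eq_upto L (p * r) (p' * r').
Proof.
move=> H1 H2 i Hi; rewrite !coefM; apply: eq_bigr => j _.
have Hj : (j <= i)%N by rewrite -ltnS.
rewrite H1 ?H2 //; first exact: leq_ltn_trans (leq_subr _ _) Hi.
exact: leq_ltn_trans Hj Hi.
Qed.

Lemma eq_uptoMl L p r s : eq_upto L p r -> eq_upto L (p * s) (r * s).
Proof. by move=> H; apply: eq_uptoM. Qed.

Lemma eq_upto_sum L (I : Type) (s : seq I) (P : pred I) (F G : I -> {poly R}) :
  (forall i, P i -> eq_upto L (F i) (G i)) ->
  eq_upto L (\sum_(i <- s | P i) F i) (\sum_(i <- s | P i) G i).
Proof. by move=> H; apply: (big_ind2 (eq_upto L)) => // *; apply: eq_uptoD. Qed.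

Lemma eq_upto_XnM L t p r :
  eq_upto L p r -> eq_upto (L + t) ('X^t * p) ('X^t * r).
Proof.
move=> H i Hi; rewrite !coefXnM; case: ltnP => // Hti; apply: H.
by rewrite ltn_subLR // addnC.
Qed.

Lemma eq_upto_prod_1subXn L (I : Type) (s : seq I) (P : pred I) (F : I -> nat) :
  (forall i, P i -> L <= F i)%N ->
  eq_upto L (\prod_(i <- s | P i) (1 - 'X^(F i))) 1.
Proof.
move=> H; apply: (big_ind (fun p => eq_upto L p 1)) => //.
  by move=> p r Hp Hr; rewrite -(mulr1 1); apply: eq_uptoM.
move=> i /H Hi k Hk; rewrite coefB coefXn.
by rewrite (_ : (k == F i) = false) ?subr0 //; apply/negbTE; rewrite neq_ltn (leq_trans Hk Hi).
Qed.

End TruncatedEquality.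

Section GaussianBinomial.
Variable R : nzRingType.

Fixpoint gauss_binom (q : R) (N j : nat) : R :=
  match N, j with
  | 0, _ => (j == 0)%:R
  | N'.+1, 0 => 1
  | N'.+1, j'.+1 => gauss_binom q N' j' + q ^+ j'.+1 * gauss_binom q N' j'.+1
  end.

Lemma gauss_binomN0 q N : gauss_binom q N 0 = 1.
Proof. by case: N. Qed.

Lemma gauss_binom_small q N j : (N < j)%N -> gauss_binom q N j = 0.
Proof. by elim: N j => [|N IH] [|j] //= Hj; rewrite !IH ?mulr0 ?addr0 // ltnW. Qed.

End GaussianBinomial.

Lemma rmorph_gauss_binom (R S : nzRingType) (f : {rmorphism R -> S}) q N j :
  f (gauss_binom q N j) = gauss_binom (f q) N j.
Proof.
elim: N j => [|N IH] [|j] /=; rewrite ?rmorph_nat ?rmorph1 //.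
by rewrite rmorphD rmorphM rmorphXn !IH.
Qed.

Lemma q_binomial (R : comNzRingType) (q : R) N x y :
  \prod_(i < N) (y + x * q ^+ i) =
  \sum_(j < N.+1) q ^+ 'C(j, 2) * gauss_binom q N j * x ^+ j * y ^+ (N - j).
Proof.
elim: N x y => [|N IH] x y.
  by rewrite big_ord0 big_ord1 /= bin0n subnn !expr0 !mulr1.
rewrite big_ord_recl /= expr0 mulr1.
under eq_bigr => i _ do rewrite /bump /= add1n exprS mulrA [x * q]mulrC.
rewrite IH [RHS]big_ord_recl /= bin0n /= !expr0 !mul1r subn0.
set f := fun j : nat =>
  q ^+ ('C(j, 2) + j) * gauss_binom q N j * x ^+ j * y ^+ (N.+1 - j).
have Hy : y * \sum_(j < N.+1)
    q ^+ 'C(j, 2) * gauss_binom q N j * (q * x) ^+ j * y ^+ (N - j)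
  = \sum_(j < N.+2) f j.
  rewrite big_distrr [in RHS]big_ord_recr /= /f gauss_binom_small // mulr0 !mul0r addr0.
  apply: eq_bigr => j _; rewrite exprMn exprD subSn; last by rewrite -ltnS.
  by rewrite exprS; ring.
rewrite mulrDl Hy big_ord_recl /f /= gauss_binomN0 bin0n addn0 !expr0 !mulr1 subn0 mul1r.
rewrite -addrA; congr (_ + _).
rewrite big_distrr -big_split /=; apply: eq_bigr => j _.
rewrite /bump /= add1n binS bin1 subSS exprMn !exprD !exprS !add0n; ring.
Qed.

Section EulerProduct.
Variable R : comNzRingType.
Notation P := {poly R}.

Definition euler_prod n : P := \prod_(i < n) (1 - 'X^(i.+1)).

Definition euler_prod_top N j : P := \prod_(i < j) (1 - 'X^(N - j + i.+1)).

Lemma euler_prodS n : euler_prod n.+1 = euler_prod n * (1 - 'X^(n.+1)).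
Proof. by rewrite /euler_prod big_ord_recr. Qed.

Lemma euler_prodD a b :
  euler_prod (a + b) = euler_prod a * \prod_(i < b) (1 - 'X^(a + i.+1)).
Proof.
by rewrite /euler_prod big_split_ord; congr (_ * _); apply: eq_bigr => i _; rewrite addnS.
Qed.

Lemma euler_prod_topS N j :
  (j <= N)%N -> euler_prod_top N.+1 j.+1 = euler_prod_top N j * (1 - 'X^(N.+1)).
Proof.
by move=> Hj; rewrite /euler_prod_top big_ord_recr /= subSS addnS subnK.
Qed.

Lemma euler_prod_topSl N j :
  (j < N)%N -> euler_prod_top N j.+1 = (1 - 'X^(N - j)) * euler_prod_top N j.
Proof.
move=> Hj; rewrite /euler_prod_top big_ord_recl /= addn1 subnSK //.
by congr (_ * _); apply: eq_bigr => i _; rewrite /bump /= add1n; congr (1 - 'X^_); lia.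
Qed.

Lemma gauss_binom_euler N j :
  (j <= N)%N -> gauss_binom 'X N j * euler_prod j = euler_prod_top N j.
Proof.
elim: N j => [|N IH] [|j] //=; try by rewrite /euler_prod /euler_prod_top !big_ord0 mulr1.
rewrite ltnS => Hj; rewrite euler_prodS euler_prod_topS //.
case: (ltngtP j N) Hj => // [HjN|->] _; last first.
  by rewrite (gauss_binom_small _ (ltnSn N)) mulr0 addr0 mulrA IH.
rewrite -euler_prodS mulrDl -mulrA IH // euler_prodS mulrA IH ?(ltnW HjN) //.
rewrite euler_prod_topSl // (_ : N.+1 = j.+1 + (N - j))%N; last by lia.
by rewrite exprD; ring.
Qed.

(* The Gaussian binomial is [prod_(N-j < k <= N) (1 - q^k) / prod_(k <= j) (1 - q^k)]. *)
Lemma gauss_binom_euler_upto N j n : (j <= N)%N ->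
  eq_upto (minn (minn j n) (N - j)).+1 (gauss_binom 'X N j * euler_prod n) 1.
Proof.
move=> HjN; set L := (minn _ _).+1.
have top1 : eq_upto L (euler_prod_top N j) 1 by apply: eq_upto_prod_1subXn => i _; lia.
have [Hjn | Hnj] := leqP j n.
  rewrite -(subnKC Hjn) euler_prodD mulrA gauss_binom_euler //.
  rewrite -[X in eq_upto _ _ X](mulr1 1); apply: eq_uptoM => //.
  by apply: eq_upto_prod_1subXn => i _; lia.
have rest1 : eq_upto L (\prod_(i < j - n) (1 - 'X^(n + i.+1)) : P) 1.
  by apply: eq_upto_prod_1subXn => i _; lia.
move: top1; rewrite -gauss_binom_euler // -(subnKC (ltnW Hnj)) euler_prodD mulrA.
apply: eq_upto_trans.
by rewrite -{1}(mulr1 (_ * _)); apply: eq_uptoM => //; apply: eq_upto_sym.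
Qed.

Lemma prod_Xn_subXi n :
  \prod_(i < n) ('X^n - 'X^i : P) = (-1) ^+ n * 'X^'C(n, 2) * euler_prod n.
Proof.
transitivity (\prod_(i < n) ((-1) * 'X^i * (1 - 'X^(n - i)) : P)).
  apply: eq_bigr => i _; rewrite mulrBr mulr1 -mulrA -exprD subnKC; last exact: ltnW.
  ring.
rewrite !big_split /= prodr_const card_ord prodrXr.
rewrite -(big_mkord xpredT (fun i => i)) bin2_sum; congr (_ * _).
rewrite /euler_prod (reindex_inj rev_ord_inj) /=; apply: eq_bigr => i _.
by congr (1 - 'X^_); have := ltn_ord i; lia.
Qed.

Lemma prod_Xn_subXnSi n :
  \prod_(i < n) ('X^n - 'X^(n + i.+1) : P) = 'X^(n * n) * euler_prod n.
Proof.
transitivity (\prod_(i < n) ('X^n * (1 - 'X^(i.+1)) : P)).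
  by apply: eq_bigr => i _; rewrite mulrBr mulr1 -exprD.
by rewrite big_split /= prodr_const card_ord -exprM.
Qed.

End EulerProduct.

Section JacobiExponent.
Local Open Scope nat_scope.

Lemma bin2_mul2 m : 'C(m, 2) * 2 = m * m.-1.
Proof.
elim: m => [|m IH]; first by rewrite bin0n.
by rewrite binS bin1 mulnDl IH; case: m {IH} => [|m] /=; lia.
Qed.

Lemma bin2_ge_pred d : d.-1 <= 'C(d, 2).
Proof. by have := bin2_mul2 d; case: d => [|d] /=; nia. Qed.

(* With [k = n - j] for [j <= n] and [k = j - n - 1] for [j > n], this is [k(k+1)/2]:
   truncated subtraction kills the other summand. *)
Definition jacobi_exp n j := 'C(j - n, 2) + 'C(n.+1 - j, 2).

Lemma jacobi_expE n j : j <= n + n.+1 ->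
  'C(j, 2) + n * (n + n.+1 - j) = 'C(n, 2) + n + n * n + jacobi_exp n j.
Proof.
move=> Hj; apply/eqP; rewrite -(eqn_pmul2r (isT : 0 < 2)); apply/eqP.
rewrite /jacobi_exp !mulnDl !bin2_mul2.
case: (leqP j n) => Hjn.
  have [d Hd] : exists d, n = (j + d) by exists (n - j); lia.
  subst n; rewrite (_ : j - (j + d) = 0); last by lia.
  rewrite (_ : (j + d).+1 - j = d.+1); last by lia.
  by case: j Hj Hjn => [|j] /=; case: d => [|d] /=; nia.
have [d Hd] : exists d, j = (n.+1 + d) by exists (j - n.+1); lia.
subst j; rewrite (_ : n.+1 + d - n = d.+1); last by lia.
rewrite (_ : n.+1 - (n.+1 + d) = 0); last by lia.
rewrite (_ : n + n.+1 - (n.+1 + d) = n - d); last by lia.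
have [e He] : exists e, n = (d + e) by exists (n - d); lia.
subst n; rewrite (_ : d + e - d = e); last by lia.
by case: d Hj Hjn => [|d] /=; case: e => [|e] /=; nia.
Qed.

End JacobiExponent.

Section Jacobi.
Variable R : comNzRingType.
Notation P := {poly R}.

Lemma lreg_polyXn k : GRing.lreg ('X^k : P).
Proof.
move=> p q; rewrite ![('X^k * _)]mulrC => /(congr1 (drop_poly k)).
by rewrite !drop_polyMXn_id.
Qed.

Lemma deriv1_scaleXn (c : P) j : ((c *: ('X^j : {poly P}))^`()).[1] = c * j%:R.
Proof. by rewrite derivZ derivXn hornerZ hornerMn hornerXn expr1n. Qed.

Lemma deriv1_mul_root (A g C : {poly P}) : g.[1] = 0 ->
  ((A * (g * C))^`()).[1] = A.[1] * (g^`()).[1] * C.[1].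
Proof. by move=> H; rewrite !derivM !(hornerD, hornerM) H; ring. Qed.

Lemma deriv1_q_binomial_term a N j k m :
  (('X%:P) ^+ a * gauss_binom ('X%:P) N j * (- 'X) ^+ j * (('X%:P) ^+ k) ^+ m
     : {poly P})^`().[1]
  = 'X^a * gauss_binom 'X N j * 'X^(k * m) * ((-1) ^+ j * j%:R).
Proof.
rewrite -(rmorph_gauss_binom polyC) -!polyC_exp -exprM.
rewrite (_ : _ * _ = ('X^a * gauss_binom 'X N j * 'X^(k * m) * (-1) ^+ j) *: 'X^j).
  by rewrite deriv1_scaleXn mulrA.
by rewrite -mul_polyC !polyCM rmorph_sign [(- 'X) ^+ j]exprNn; ring.
Qed.

(* Differentiate [prod_(i <= 2n) (q^n - z q^i)] in [z] at [z = 1]; only the factor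
   [i = n] vanishes there, and the q-binomial theorem expands the other side. *)
Lemma jacobi_finite_shifted n :
  (-1) ^+ n * 'X^'C(n, 2) * euler_prod R n * (- 'X^n) * ('X^(n * n) * euler_prod R n) =
  \sum_(j < (n + n.+1).+1) 'X^'C(j, 2) * gauss_binom 'X (n + n.+1) j
    * 'X^(n * (n + n.+1 - j)) * ((-1) ^+ j * j%:R).
Proof.
have := congr1 (fun p : {poly P} => (p^`()).[1])
  (q_binomial ('X%:P) (n + n.+1) (- 'X) ('X%:P ^+ n)).
rewrite /= raddf_sum horner_sum (eq_bigr _ (fun j _ => deriv1_q_binomial_term _ _ _ _ _)).
move=> <-; rewrite big_split_ord /= big_ord_recl /= addn0 -!polyC_exp.
have root1 : (('X^n)%:P + - 'X * ('X^n)%:P : {poly P}).[1] = 0.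
  by rewrite hornerD hornerM hornerN hornerX hornerC mulN1r subrr.
have deriv_root : (('X^n)%:P + - 'X * ('X^n)%:P : {poly P})^`().[1] = - 'X^n.
  rewrite derivD derivC derivM derivN derivX derivC mulr0 addr0 mulN1r add0r.
  by rewrite hornerN hornerC.
have factor1 k : (('X^n)%:P + - 'X * ('X%:P) ^+ k : {poly P}).[1] = 'X^n - 'X^k.
  by rewrite -polyC_exp hornerD hornerM hornerN hornerX !hornerC mulN1r.
rewrite deriv1_mul_root // deriv_root !horner_prod.
under eq_bigr => i _ do rewrite factor1.
rewrite [X in _ = _ * X](eq_bigr (fun i : 'I_n => 'X^n - 'X^(n + i.+1))); last first.
  by move=> i _; rewrite factor1 /bump add1n.
by rewrite prod_Xn_subXi prod_Xn_subXnSi; ring.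
Qed.

Lemma jacobi_finite n : (-1) ^+ n.+1 * euler_prod R n ^+ 2 =
  \sum_(j < (n + n.+1).+1)
    ((-1) ^+ j * j%:R) * ('X^(jacobi_exp n j) * gauss_binom 'X (n + n.+1) j).
Proof.
apply: (@lreg_polyXn ('C(n, 2) + n + n * n)); rewrite big_distrr /=.
rewrite (_ : _ * (_ * _) = (-1) ^+ n * 'X^'C(n, 2) * euler_prod R n * (- 'X^n)
                             * ('X^(n * n) * euler_prod R n)); last first.
  by rewrite !exprD exprS; ring.
rewrite jacobi_finite_shifted; apply: eq_bigr => j _.
have Hj : (j <= n + n.+1)%N by rewrite -ltnS.
rewrite (_ : 'X^('C(n, 2) + n + n * n) * _ = 'X^('C(n, 2) + n + n * n + jacobi_exp n j)
                * ((-1) ^+ j * j%:R * gauss_binom 'X (n + n.+1) j)); last first.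
  by rewrite [in RHS]exprD; ring.
by rewrite -jacobi_expE // exprD; ring.
Qed.

Lemma jacobi_upto n : eq_upto n.+1 ((-1) ^+ n.+1 * euler_prod R n ^+ 3)
  (\sum_(j < (n + n.+1).+1) ((-1) ^+ j * j%:R) * 'X^(jacobi_exp n j)).
Proof.
rewrite (_ : _ * _ = (-1) ^+ n.+1 * euler_prod R n ^+ 2 * euler_prod R n); last first.
  by rewrite exprS; ring.
rewrite jacobi_finite big_distrl; apply: eq_upto_sum => j _ /=.
have Hj : (j <= n + n.+1)%N by rewrite -ltnS.
rewrite -mulrA -[X in _ * X]mulrA; apply: eq_uptoM => //.
rewrite -[X in eq_upto _ _ X](mulr1 'X^_).
have := eq_upto_XnM (t := jacobi_exp n j) (gauss_binom_euler_upto R (n := n) Hj).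
apply: eq_upto_leq.
by have := bin2_ge_pred (j - n); have := bin2_ge_pred (n.+1 - j); rewrite /jacobi_exp; lia.
Qed.

End Jacobi.

Lemma big_ord_fold (V : nmodType) n (f : nat -> V) :
  \sum_(j < (n + n.+1).+1) f j = \sum_(k < n.+1) (f (n.+1 + k)%N + f (n - k)%N).
Proof.
rewrite -addSn big_split_ord /= big_split /= addrC; congr (_ + _).
by rewrite (reindex_inj rev_ord_inj) /=; apply: eq_bigr => i _; rewrite subSS.
Qed.

Lemma jacobi_exp_fold n k : (k <= n)%N ->
  jacobi_exp n (n.+1 + k) = 'C(k.+1, 2) /\ jacobi_exp n (n - k) = 'C(k.+1, 2).
Proof.
move=> Hk; rewrite /jacobi_exp.
rewrite (_ : (n.+1 + k - n = k.+1)%N); last by lia.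
rewrite (_ : (n.+1 - (n.+1 + k) = 0)%N); last by lia.
rewrite (_ : (n.+1 - (n - k) = k.+1)%N); last by lia.
by rewrite (_ : (n - k - n = 0)%N) ?bin0n ?addn0; last by lia.
Qed.

(* The triangular numbers are [0, 1, 3, 1, 0] modulo 5, and [k(k+1)/2 = 3] needs [k = 2]. *)
Lemma bin2S_mod5 k : (2 <= 'C(k.+1, 2) %% 5)%N -> (5 %| 2 * k + 1)%N.
Proof.
move=> Hs; have := bin2_mul2 k.+1; rewrite /=.
have := divn_eq k 5; have := divn_eq ('C(k.+1, 2)) 5.
have := ltn_mod k 5; have := ltn_mod ('C(k.+1, 2)) 5.
move: (k %/ 5)%N (k %% 5)%N ('C(k.+1, 2) %/ 5)%N ('C(k.+1, 2) %% 5)%N Hs.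
move: ('C(k.+1, 2)) => c q r p s Hs Hs5 Hr -> ->.
by case: r Hr => [|[|[|[|[|r]]]]] // _; case: s Hs Hs5 => [|[|[|[|[|s]]]]] // _ _; nia.
Qed.

Section ModFive.
Variable R : comNzRingType.
Hypothesis pchar5 : 5 \in [pchar R].
Notation P := {poly R}.

Lemma coef_sign_natXn j t M :
  (((-1) ^+ j * j%:R : P) * 'X^t)`_M = (-1) ^+ j * j%:R * (M == t)%:R.
Proof. by rewrite -(rmorph_sign polyC) -polyC_natr -polyCM coefCM coefXn. Qed.

Lemma coef_euler_prod3_mod5 n M :
  (M <= n)%N -> (2 <= M %% 5)%N -> (euler_prod R n ^+ 3)`_M = 0.
Proof.
move=> HMn HM; apply: (@lreg_sign _ n.+1); rewrite mulr0.
have := @jacobi_upto R n M; rewrite ltnS -(rmorph_sign polyC) coefCM => /(_ HMn) ->.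
rewrite coef_sum.
rewrite (big_ord_fold n (fun j => ((-1) ^+ j * j%:R * 'X^(jacobi_exp n j) : P)`_M)).
apply: big1 => k _; have Hk : (k <= n)%N by rewrite -ltnS.
have [-> ->] := jacobi_exp_fold Hk; rewrite !coef_sign_natXn.
case: eqP => [HMk | _]; last by rewrite !mulr0 addr0.
have /dvdnP [m Hm] : (5 %| 2 * k + 1)%N by apply: bin2S_mod5; rewrite -HMk.
rewrite (_ : (n.+1 + k = n - k + (2 * k + 1))%N); last by lia.
rewrite exprD natrD Hm natrM (pcharf0 pchar5) mulr0 addr0 -Hm addn1 exprS mulnC exprM.
by rewrite sqrr_sign !mulr1 mulrN1 mulNr addNr.
Qed.

Lemma expr5_1subr (y : P) : (1 - y) ^+ 5 = 1 - y ^+ 5.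
Proof.
have pchar5P : 5 \in [pchar P] by rewrite pchar_poly.
rewrite -!(pFrobenius_autE pchar5P) (pFrobenius_autB_comm _ (esym (commr1 y))).
by rewrite pFrobenius_aut1.
Qed.

Lemma euler_prod_exp5 n : euler_prod R n ^+ 5 = \prod_(i < n) (1 - 'X^(5 * i.+1)).
Proof.
by rewrite /euler_prod -prodrXl; apply: eq_bigr => i _; rewrite expr5_1subr -exprM mulnC.
Qed.

End ModFive.

Section MultipleSupport.
Variable R : comNzRingType.
Notation P := {poly R}.

Definition supp_mult (d : nat) (p : P) := forall i, ~~ (d %| i)%N -> p`_i = 0.

Lemma supp_multM d p r : supp_mult d p -> supp_mult d r -> supp_mult d (p * r).
Proof.
move=> Hp Hr i Hi; rewrite coefM big1 // => j _.
have [Hj | Hj] := boolP (d %| j)%N; last by rewrite Hp ?mul0r.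
rewrite Hr ?mulr0 //; apply: contra Hi => Hij.
by rewrite -(subnKC (_ : j <= i)%N) ?dvdn_add // -ltnS.
Qed.

Lemma supp_mult_prod_1subXn d n (F : 'I_n -> nat) :
  supp_mult d (\prod_(i < n) (1 - 'X^(d * F i))).
Proof.
apply: (big_ind (supp_mult d)); [|exact: supp_multM|].
  by move=> [|i] Hi; rewrite coef1 //; rewrite dvdn0 in Hi.
move=> i _ k Hk; rewrite coefB coef1 coefXn.
have -> : (k == 0)%N = false by apply/negbTE; apply: contra Hk => /eqP ->.
have -> : (k == d * F i)%N = false.
  by apply/negbTE; apply: contra Hk => /eqP ->; rewrite dvdn_mulr.
by rewrite subr0.
Qed.

Lemma coef_eq0_mul_supp_mult d L (a c g : P) (T : pred nat) :
  eq_upto L (a * c) g -> c`_0 = 1 -> supp_mult d c ->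
  (forall i, (i < L)%N -> T (i %% d)%N -> g`_i = 0) ->
  forall i, (i < L)%N -> T (i %% d)%N -> a`_i = 0.
Proof.
move=> Hac Hc0 Hc Hg; elim/ltn_ind => i IH HiL Hi.
have := Hac i HiL; rewrite Hg // coefMr big_ord_recl /= subn0 Hc0 mulr1 big1 ?addr0 //.
move=> j _; rewrite /bump /= add1n.
have [/dvdnP [k Hk] | Hj] := boolP (d %| j.+1)%N; last by rewrite Hc ?mulr0.
have Hji : (j < i)%N by have := ltn_ord j.
rewrite IH ?mul0r //; try lia.
by rewrite -(modnMDl k _ d) -Hk subnKC.
Qed.

End MultipleSupport.

Section TruncatedSeries.
Variable R : comNzRingType.
Notation P := {poly R}.

Definition trunc_fps L (f : fps) : P := \poly_(i < L) (f i)%:R.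

Lemma trunc_fps_mul L f g :
  eq_upto L (trunc_fps L (fps_mul f g)) (trunc_fps L f * trunc_fps L g).
Proof.
move=> i Hi; rewrite coefM coef_poly Hi /fps_mul natr_sum; apply: eq_bigr => j _.
have Hj : (j <= i)%N by rewrite -ltnS.
by rewrite !coef_poly natrM (leq_ltn_trans Hj Hi) (leq_ltn_trans (leq_subr j i) Hi).
Qed.

Lemma eq_upto_mul_1subXn L (p r : P) m :
  (forall i, (i < L)%N -> p`_i - (if (i < m)%N then 0 else p`_(i - m)) = r`_i) ->
  eq_upto L (p * (1 - 'X^m)) r.
Proof. by move=> H i Hi; rewrite mulrBr mulr1 coefB coefMXn; apply: H. Qed.

Lemma trunc_fps_geom L : eq_upto L (trunc_fps L fps_geom * (1 - 'X^1)) 1.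
Proof.
apply: eq_upto_mul_1subXn => -[|i] Hi; rewrite coef_poly Hi coef1 /fps_geom /=.
  by rewrite subr0.
by rewrite subn1 coef_poly ltnW // subrr.
Qed.

Lemma trunc_fps_inv_sq L m :
  (0 < m)%N -> eq_upto L (trunc_fps L (fps_inv_sq m) * (1 - 'X^m) ^+ 2) 1.
Proof.
move=> Hm.
have dvd_small i : (i < m)%N -> (m %| i)%N = (i == 0)%N.
  by case: i => [|i] Hi; rewrite ?dvdn0 //; apply/negbTE/negP => /(dvdn_leq (ltn0Sn i)); lia.
set d : P := \poly_(i < L) (m %| i)%N%:R.
have trunc_d : eq_upto L (trunc_fps L (fps_inv_sq m) * (1 - 'X^m)) d.
  apply: eq_upto_mul_1subXn => i Hi; rewrite !coef_poly Hi /fps_inv_sq.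
  case: ltnP => Hmi.
    by rewrite subr0 dvd_small //; case: eqP => [->|]; rewrite ?div0n.
  rewrite (leq_ltn_trans (leq_subr m i) Hi) (dvdn_subl Hmi (dvdnn m)).
  case: ifP => _; last by rewrite subrr.
  by rewrite -{1}(subnK Hmi) -{2}(mul1n m) divnDMl // addn1 mulrS addrK.
have d1 : eq_upto L (d * (1 - 'X^m)) 1.
  apply: eq_upto_mul_1subXn => i Hi; rewrite !coef_poly Hi coef1.
  case: ltnP => Hmi; first by rewrite subr0 dvd_small.
  rewrite (leq_ltn_trans (leq_subr m i) Hi) (dvdn_subl Hmi (dvdnn m)).
  by rewrite (_ : (i == 0)%N = false) ?subrr //; apply/negbTE; lia.
by rewrite expr2 mulrA; apply: eq_upto_trans (eq_uptoM trunc_d _) d1.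
Qed.

Lemma trunc_pl2_partial L N : (0 < N)%N ->
  eq_upto L (trunc_fps L (pl2_partial N) * euler_prod R N ^+ 2) (1 - 'X).
Proof.
case: N => // N _; elim: N => [|N IH].
  rewrite /euler_prod big_ord1 expr2 mulrA -[X in eq_upto _ _ X]mul1r.
  by apply: eq_uptoM => //; exact: trunc_fps_geom.
rewrite (_ : pl2_partial N.+2 = fps_mul (pl2_partial N.+1) (fps_inv_sq N.+2)) //.
rewrite euler_prodS.
apply: eq_upto_trans (eq_uptoMl _ (trunc_fps_mul _ _)) _.
rewrite (_ : _ * _ = trunc_fps L (pl2_partial N.+1) * euler_prod R N.+1 ^+ 2
                     * (trunc_fps L (fps_inv_sq N.+2) * (1 - 'X^(N.+2)) ^+ 2)); last by ring.
by rewrite -[X in eq_upto _ _ X]mulr1; apply: eq_uptoM => //; exact: trunc_fps_inv_sq.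
Qed.

End TruncatedSeries.

Lemma pl2_mod5 M : (3 <= M %% 5)%N -> (pl2 M %% 5 = 0)%N.
Proof.
move=> HM; have pchar5 : 5 \in [pchar 'F_5] by exact: pchar_Fp.
set E := euler_prod 'F_5 M; set a := trunc_fps 'F_5 M.+1 (pl2_partial M).
have aE2 : eq_upto M.+1 (a * E ^+ 2) (1 - 'X) by apply: trunc_pl2_partial; lia.
have aE5 : eq_upto M.+1 (a * E ^+ 5) ((1 - 'X) * E ^+ 3).
  rewrite (_ : E ^+ 5 = E ^+ 2 * E ^+ 3); last by rewrite -exprD.
  by rewrite mulrA; apply: eq_uptoMl.
have E5_0 : (E ^+ 5)`_0 = 1.
  rewrite -horner_coef0 horner_exp horner_prod big1 ?expr1n // => i _.
  by rewrite hornerD hornerN hornerC hornerXn expr0n subr0.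
have E5_supp : supp_mult 5 (E ^+ 5).
  by rewrite euler_prod_exp5 //; apply: supp_mult_prod_1subXn.
have rhs0 i : (i < M.+1)%N -> (3 <= i %% 5)%N -> ((1 - 'X) * E ^+ 3)`_i = 0.
  move=> Hi Hi5; rewrite mulrBl mul1r coefB coefXM (_ : (i == 0)%N = false); last first.
    by apply/negbTE; lia.
  by rewrite !coef_euler_prod3_mod5 ?subrr //; lia.
have := coef_eq0_mul_supp_mult aE5 E5_0 E5_supp rhs0 (ltnSn M) HM.
rewrite /a coef_poly ltnSn => /eqP; rewrite -(dvdn_pcharf pchar5).
by move=> /dvdnP [k Hk]; rewrite /pl2 Hk modnMl.
Qed.

Local Close Scope ring_scope.

Theorem theorem4 (n : nat) :
  pl2 (5 * n + 3) %% 5 = 0 /\ pl2 (5 * n + 4) %% 5 = 0.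
Proof. by split; apply: pl2_mod5; lia. Qed.
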